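(* Let $(\mathcal{A},\cdot,[\cdot,\cdot],\alpha)$ be a Hom-Poisson algebra, let $\lambda\in\mathbb{C}$ be fixed, and let $D$ be a derivation of $(\mathcal{A},\cdot)$ such that $D\alpha=\alpha D$ and $D([x,y])=[D(x),y]+[x,D(y)]+\lambda[x,y]$ for all $x,y\in\mathcal{A}$. Define $x\circ y=x\cdot D(y)+\lambda\, x\cdot y$ for $x,y\in\mathcal{A}$. Then $(\mathcal{A},[\cdot,\cdot],\circ,\alpha)$ is a Hom Gel'fand-Dorfman bialgebra.
   Context: All vector spaces are over $\mathbb{C}$. A Hom-associative algebra is a vector space with a bilinear map $\cdot$ and linear map $\alpha$ such that $\alpha(x)\cdot(y\cdot z)=(x\cdot y)\cdot\alpha(z)$; it is commutative if $x\cdot y=y\cdot x$. A Hom-Lie algebra is a vector space with a bilinear map $[\cdot,\cdot]$ and linear map $\alpha$ with $[x,y]=-[y,x]$ and $[[x,y],\alpha(z)]+[[y,z],\alpha(x)]+[[z,x],\alpha(y)]=0$. A Hom-Poisson algebra is a vector space $\mathcal{A}$ with operations $\cdot$, $[\cdot,\cdot]$ and a linear endomorphism $\alpha$ such that $(\mathcal{A},\cdot,\alpha)$ is a commutative Hom-associative algebra, $(\mathcal{A},[\cdot,\cdot],\alpha)$ is a Hom-Lie algebra, and $[\alpha(x),y\cdot z]=\alpha(y)\cdot[x,z]+\alpha(z)\cdot[x,y]$ for all $x,y,z$. A derivation of $(\mathcal{A},\cdot)$ is a linear map $D$ with $D(x\cdot y)=D(x)\cdot y+x\cdot D(y)$.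 A Hom-Novikov algebra is a vector space with a bilinear operation $\circ$ and a linear endomorphism $\alpha$ such that $(x\circ y)\circ\alpha(z)-\alpha(x)\circ(y\circ z)=(y\circ x)\circ\alpha(z)-\alpha(y)\circ(x\circ z)$ and $(x\circ y)\circ\alpha(z)=(x\circ z)\circ\alpha(y)$. A Hom Gel'fand-Dorfman bialgebra is a vector space $\mathcal{A}$ with a linear endomorphism $\alpha$ and two bilinear operations $[\cdot,\cdot],\circ$ such that $(\mathcal{A},[\cdot,\cdot],\alpha)$ is a Hom-Lie algebra, $(\mathcal{A},\circ,\alpha)$ is a Hom-Novikov algebra, and $[x\circ y,\alpha(z)]-[x\circ z,\alpha(y)]+[x,y]\circ\alpha(z)-[x,z]\circ\alpha(y)-\alpha(x)\circ[y,z]=0$ for all $x,y,z$. *)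

From HB Require Import structures.
From mathcomp Require Import all_boot all_order all_algebra.
From mathcomp Require Import complex.
From mathcomp Require Import reals.
Set Implicit Arguments. Unset Strict Implicit. Unset Printing Implicit Defensive.
Import GRing.Theory.
Local Open Scope ring_scope.

Section HomDefs.
Variables (K : pzRingType) (V : lmodType K).

Definition is_bilinear (m : V -> V -> V) : Prop :=
  (forall a x y z, m (a *: x + y) z = a *: m x z + m y z) /\
  (forall a x y z, m x (a *: y + z) = a *: m x y + m x z).

Definition is_linear_map (f : V -> V) : Prop :=
  forall a x y, f (a *: x + y) = a *: f x + f y.

Definition HomAssociative (mul : V -> V -> V) (alpha : V -> V) : Prop :=
  forall x y z, mul (alpha x) (mul y z) = mul (mul x y) (alpha z).

Definition Commutative (mul : V -> V -> V) : Prop :=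
  forall x y, mul x y = mul y x.

Definition HomLie (br : V -> V -> V) (alpha : V -> V) : Prop :=
  is_bilinear br /\ is_linear_map alpha /\
  (forall x y, br x y = - br y x) /\
  (forall x y z, br (br x y) (alpha z) + br (br y z) (alpha x)
                 + br (br z x) (alpha y) = 0).

Definition HomPoisson (mul br : V -> V -> V) (alpha : V -> V) : Prop :=
  is_bilinear mul /\ is_linear_map alpha /\ Commutative mul /\
  HomAssociative mul alpha /\ HomLie br alpha /\
  (forall x y z, br (alpha x) (mul y z)
                    = mul (alpha y) (br x z) + mul (alpha z) (br x y)).

Definition is_derivation (mul : V -> V -> V) (D : V -> V) : Prop :=
  is_linear_map D /\ forall x y, D (mul x y) = mul (D x) y + mul x (D y).

Definition HomNovikov (circ : V -> V -> V) (alpha : V -> V) : Prop :=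
  [/\ is_bilinear circ, is_linear_map alpha,
      (forall x y z, circ (circ x y) (alpha z) - circ (alpha x) (circ y z)
                     = circ (circ y x) (alpha z) - circ (alpha y) (circ x z)) &
      (forall x y z, circ (circ x y) (alpha z) = circ (circ x z) (alpha y))].

Definition HomGelfandDorfman (br circ : V -> V -> V) (alpha : V -> V) : Prop :=
  [/\ HomLie br alpha, HomNovikov circ alpha &
      forall x y z, br (circ x y) (alpha z) - br (circ x z) (alpha y)
                    + circ (br x y) (alpha z) - circ (br x z) (alpha y)
                    - circ (alpha x) (br y z) = 0].

End HomDefs.

From HB Require Import structures.
From mathcomp Require Import all_boot all_order all_algebra.
From mathcomp Require Import complex reals.
Set Implicit Arguments. Unset Strict Implicit.
Import GRing.Theory.
Local Open Scope ring_scope.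
Local Open Scope complex_scope.

(* Put E := D + lambda.  Then x o y = x . E(y); E commutes with alpha, is an
   ordinary derivation of the bracket, and satisfies E(y z) = E(y) z + y D(z).
   The last identity makes x o y = x . E(y) Hom-Novikov over any commutative
   Hom-associative algebra (the classical Gel'fand construction when E is a
   derivation), and the first two, together with the Hom-Leibniz rule, give
   the Gel'fand-Dorfman compatibility. *)

Section BilinearMaps.
Variables (K : pzRingType) (V : lmodType K).

Lemma eq0_addrr (x : V) : x = x + x -> x = 0.
Proof. by rewrite -{1}[x]addr0 => /addrI. Qed.

Section Bilinear.
Variables (m : V -> V -> V) (m_bilinear : is_bilinear m).

Lemma bilinear0l x : m 0 x = 0.
Proof. by have := m_bilinear.1 1 0 0 x; rewrite !scale1r addr0; apply: eq0_addrr. Qed.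

Lemma bilinear0r x : m x 0 = 0.
Proof. by have := m_bilinear.2 1 x 0 0; rewrite !scale1r addr0; apply: eq0_addrr. Qed.

Lemma bilinearDl x y z : m (x + y) z = m x z + m y z.
Proof. by rewrite -[x]scale1r m_bilinear.1 !scale1r. Qed.

Lemma bilinearDr x y z : m x (y + z) = m x y + m x z.
Proof. by rewrite -[y]scale1r m_bilinear.2 !scale1r. Qed.

Lemma bilinearZl a x y : m (a *: x) y = a *: m x y.
Proof. by have := m_bilinear.1 a x 0 y; rewrite addr0 bilinear0l addr0. Qed.

Lemma bilinearZr a x y : m x (a *: y) = a *: m x y.
Proof. by have := m_bilinear.2 a x y 0; rewrite addr0 bilinear0r addr0. Qed.

Lemma bilinearNr x y : m x (- y) = - m x y.
Proof. by rewrite -scaleN1r bilinearZr scaleN1r. Qed.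

End Bilinear.

Section LinearMap.
Variables (f : V -> V) (f_linear : is_linear_map f).

Lemma linear_mapD x y : f (x + y) = f x + f y.
Proof. by rewrite -[x]scale1r f_linear !scale1r. Qed.

Lemma linear_map0 : f 0 = 0.
Proof. by have := linear_mapD 0 0; rewrite addr0; apply: eq0_addrr. Qed.

Lemma linear_mapZ a x : f (a *: x) = a *: f x.
Proof. by have := f_linear a x 0; rewrite addr0 linear_map0 addr0. Qed.

End LinearMap.

Lemma bilinear_comp_r (m : V -> V -> V) (f : V -> V) :
  is_bilinear m -> is_linear_map f -> is_bilinear (fun x y => m x (f y)).
Proof.
move=> m_bil f_lin; split=> a x y z; first exact: m_bil.1.
by rewrite f_lin (bilinearDr m_bil) (bilinearZr m_bil).
Qed.

End BilinearMaps.

Section GelfandConstruction.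
Variables (K : pzRingType) (V : lmodType K).
Variables (mul br : V -> V -> V) (alpha E F : V -> V).
Hypotheses (E_linear : is_linear_map E)
           (E_alpha : forall x, E (alpha x) = alpha (E x)).

Lemma hom_novikov_mulr_map :
  is_bilinear mul -> is_linear_map alpha -> Commutative mul ->
  HomAssociative mul alpha ->
  (forall y z, E (mul y z) = mul (E y) z + mul y (F z)) ->
  HomNovikov (fun x y => mul x (E y)) alpha.
Proof.
move=> mul_bil alpha_lin mulC mulA E_mul.
split=> // [|x y z|x y z]; first exact: bilinear_comp_r.
- have assoc_defect u v :
      mul (mul u (E v)) (E (alpha z)) - mul (alpha u) (E (mul v (E z)))
      = - mul (mul u v) (alpha (F (E z))).
    rewrite E_alpha -mulA E_mul (bilinearDr mul_bil) opprD addrA subrr add0r.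
    by rewrite mulA.
  by rewrite !assoc_defect (mulC x y).
- by rewrite !E_alpha -!mulA (mulC (E y)).
Qed.

Lemma hom_gelfand_dorfman_mulr_map :
  HomPoisson mul br alpha ->
  (forall y z, E (mul y z) = mul (E y) z + mul y (F z)) ->
  (forall y z, E (br y z) = br (E y) z + br y (E z)) ->
  HomGelfandDorfman br (fun x y => mul x (E y)) alpha.
Proof.
move=> [mul_bil [alpha_lin [mulC [mulA [br_HomLie leibniz]]]]] E_mul E_br.
have [br_bil [_ [brN _]]] := br_HomLie.
have leibniz_l a b c :
    br (mul b c) (alpha a) = mul (alpha b) (br c a) + mul (alpha c) (br b a).
  by rewrite brN leibniz opprD -!(bilinearNr mul_bil) -!brN.
split=> // [|x y z]; first exact: hom_novikov_mulr_map.
rewrite !E_alpha !leibniz_l E_br (bilinearDr mul_bil) (mulC (br x y)) (mulC (br x z)).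
rewrite (brN (E z) y) (bilinearNr mul_bil).
set A := mul (alpha x) (br (E y) z).
set B := mul (alpha (E y)) (br x z).
set C := mul (alpha (E z)) (br x y).
by rewrite opprD opprK addrA subrK [A + B + _]addrAC addrK subrr.
Qed.

End GelfandConstruction.

Theorem theorem3p15 (R : realType) (V : lmodType R[i])
    (mul br : V -> V -> V) (alpha D : V -> V) (lambda : R[i]) :
  HomPoisson mul br alpha ->
  is_derivation mul D ->
  (forall x, D (alpha x) = alpha (D x)) ->
  (forall x y, D (br x y) = br (D x) y + br x (D y) + lambda *: br x y) ->
  HomGelfandDorfman br (fun x y => mul x (D y) + lambda *: mul x y) alpha.
Proof.
move=> homPoisson [D_linear D_mul] D_alpha D_br.
have [mul_bil [alpha_lin _]] := homPoisson.
have [br_bil _] := homPoisson.2.2.2.2.1.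
pose E y := D y + lambda *: y.
have -> : (fun x y => mul x (D y) + lambda *: mul x y) = (fun x y => mul x (E y)).
  do 2!apply: boolp.funext => ?.
  by rewrite /E (bilinearDr mul_bil) (bilinearZr mul_bil).
apply: (hom_gelfand_dorfman_mulr_map (F := D)) => // [a x y|x|y z|y z].
- by rewrite /E D_linear !scalerDr addrACA !scalerA mulrC.
- by rewrite /E D_alpha (linear_mapD alpha_lin) (linear_mapZ alpha_lin).
- by rewrite /E D_mul (bilinearDl mul_bil) (bilinearZl mul_bil) addrAC.
- rewrite /E D_br (bilinearDl br_bil) (bilinearDr br_bil).
  rewrite (bilinearZl br_bil) (bilinearZr br_bil).
  by rewrite -!addrA; congr (_ + _); rewrite addrCA.
Qed.
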